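(* Let $n$ and $k$ be even positive integers with $n>k$. Then $\mathrm{msum}(n,k)=1$.
   Context: Let $n,k$ be positive integers with $n>k$ and let $S_n$ be the set of permutations $\pi=(\pi_1,\dots,\pi_n)$ of $1,\dots,n$. Indices are taken cyclically: $\pi_{n+i}=\pi_i$. The $k$-consecutive sums of $\pi$ are $s_i=\sum_{j=0}^{k-1}\pi_{i+j}$ for $i=1,\dots,n$. Define $\mathrm{msum}(\pi,k)=\max\{s_i: 1\le i\le n\}-\frac{k(n+1)}{2}$ and $\mathrm{msum}(n,k)=\min\{\mathrm{msum}(\pi,k):\pi\in S_n\}$. *)

From mathcomp Require Import all_boot all_order all_algebra.
Set Implicit Arguments. Unset Strict Implicit. Unset Printing Implicit Defensive.
Import Order.TTheory GRing.Theory Num.Theory.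

(* A permutation pi = (pi_1,...,pi_n) of 1..n is represented by the sequence
   s = [:: pi_1; ...; pi_n]; S_n is the list  permutations (iota 1 n).
   Indices are 0-based and cyclic: pi_{i+1} = nth 0 s (i %% n). *)

Definition kcsum (s : seq nat) (k i : nat) : nat :=
  \sum_(j < k) nth 0 s ((i + j) %% size s).

Definition maxkcsum (s : seq nat) (k : nat) : nat :=
  \max_(i < size s) kcsum s k i.

Definition msum_perm (s : seq nat) (k : nat) : rat :=
  (maxkcsum s k)%:R - (k * (size s + 1))%:R / 2%:R.

(* msum(n,k) = min over pi in S_n of msum(pi,k); the initial value of the
   fold is msum of the identity permutation, which belongs to S_n. *)
Definition msum (n k : nat) : rat :=
  \big[Order.min/msum_perm (iota 1 n) k]_(s <- permutations (iota 1 n))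
     msum_perm s k.

(* Summing the n cyclic window sums gives k n (n + 1) / 2, so the largest one is at
   least the average k (n + 1) / 2; equality would make all windows equal, forcing
   pi_i = pi_(i+k). Hence, for k = 2 l even, msum >= 1. For n = 2 m, put the pairs
   (a_p + 1, n - a_p), of sum n + 1, at positions 2 p, 2 p + 1, where a is a
   permutation of Z/m. A window starting at 2 p sums to l (n + 1), one starting at
   2 p + 1 to l (n + 1) + a_(p+l) - a_p, so msum = 1 as soon as a_(p+l) <= a_p + 1.
   This holds when a ranks Z/m coset by coset of the subgroup generated by l, each
   coset listed as r, r + l, r + 2 l, ...: a step p -> p + l raises the rank by one,
   except from the last element of a coset back to its first. *)

From mathcomp Require Import all_boot all_order all_algebra.
From mathcomp Require Import zify.
Import Order.TTheory GRing.Theory Num.Theory.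

Set Implicit Arguments.
Unset Strict Implicit.
Unset Printing Implicit Defensive.

Lemma kcsumS s k i :
  kcsum s k i.+1 + nth 0 s (i %% size s) = kcsum s k i + nth 0 s ((i + k) %% size s).
Proof.
rewrite /kcsum; transitivity (\sum_(j < k.+1) nth 0 s ((i + j) %% size s)).
  rewrite big_ord_recl addn0 addnC; congr (_ + _); apply: eq_bigr => j _.
  by rewrite /= /bump /= add1n addnS addSn.
by rewrite big_ord_recr.
Qed.

Lemma sum_modn_shift n (F : nat -> nat) j :
  \sum_(i < n) F ((i + j) %% n) = \sum_(i < n) F i.
Proof.
case: n => [|n]; first by rewrite !big_ord0.
rewrite [RHS](reindex_inj (addIr (inZp j : 'I_n.+1))).
by apply: eq_bigr => i _; rewrite /= modnDmr.
Qed.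

Lemma sum_kcsum s k : \sum_(i < size s) kcsum s k i = k * \sum_(x <- s) x.
Proof.
rewrite /kcsum exchange_big [in RHS](big_nth 0) big_mkord /=.
under eq_bigr do rewrite (sum_modn_shift _ (nth 0 s)).
by rewrite sum_nat_const card_ord.
Qed.

Lemma sum_iota1 n : (\sum_(x <- iota 1 n) x).*2 = n * n.+1.
Proof.
elim: n => [|n IHn]; first by rewrite big_nil.
by rewrite -[n.+1]addn1 iotaD big_cat big_seq1 doubleD IHn; lia.
Qed.

Lemma maxkcsum_gt s n k : perm_eq s (iota 1 n) -> 0 < k < n ->
  k * n.+1 < (maxkcsum s k).*2.
Proof.
move=> s_perm /andP[k_gt0 lt_kn].
have size_s : size s = n by rewrite (perm_size s_perm) size_iota.
have lt0s : 0 < size s by rewrite size_s (leq_ltn_trans _ lt_kn).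
have lt1s : 1 < size s by rewrite size_s (leq_ltn_trans _ lt_kn).
rewrite ltnNge; apply/negP => max_le.
have kcsum_le (i : 'I_(size s)) : (kcsum s k i).*2 <= k * n.+1.
  by apply: leq_trans max_le; rewrite leq_double (leq_bigmax_cond _ (erefl true)).
have sum_eq : \sum_(i < size s) (kcsum s k i).*2 = \sum_(i < size s) k * n.+1.
  rewrite sum_nat_const card_ord -(big_morph double doubleD (erefl 0.*2)) sum_kcsum.
  by rewrite doubleMr (perm_big _ s_perm) sum_iota1 size_s mulnCA.
have [_] := leqif_sum (P := predT) (fun i _ => leqif_eq (kcsum_le i)).
rewrite sum_eq eqxx => /esym/forall_inP kcsum_eq.
move: (kcsum_eq (Ordinal lt1s) isT) (kcsum_eq (Ordinal lt0s) isT).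
move=> /= /eqP kcsum1 /eqP kcsum0.
have kcsum01 : kcsum s k 1 = kcsum s k 0 by apply: double_inj; rewrite kcsum1 kcsum0.
have := kcsumS s k 0; rewrite kcsum01 => /addnI.
rewrite mod0n add0n modn_small ?size_s // => /eqP.
by rewrite nth_uniq ?size_s ?(perm_uniq s_perm) ?iota_uniq //; lia.
Qed.

Section CosetOrder.

Variables l m : nat.
Hypothesis m_gt0 : 0 < m.

(* c is the additive order of l in Z/m and g the number of cosets of the subgroup
   it generates; index r * c + t (t < c) is sent to the element r + t l (mod m). *)
Local Notation g := (gcdn l m).
Local Notation c := (m %/ gcdn l m).

Definition coset_enum i := (i %/ c + i %% c * l) %% m.

Definition coset_rank j := index j (mkseq coset_enum m).

Lemma order_gt0 : 0 < c.
Proof. by rewrite divn_gt0 ?gcdn_gt0 ?m_gt0 ?orbT // dvdn_leq ?dvdn_gcdr. Qed.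

Lemma order_mul_gcd : c * g = m.
Proof. by rewrite divnK ?dvdn_gcdr. Qed.

Lemma div_order_lt i : i < m -> i %/ c < g.
Proof. by move=> lt_im; rewrite ltn_divLR ?order_gt0 // mulnC order_mul_gcd. Qed.

Lemma lt_order_mul_mod_inj t1 t2 :
  t1 < c -> t2 < c -> t1 * l = t2 * l %[mod m] -> t1 = t2.
Proof.
wlog le_t12 : t1 t2 / t1 <= t2.
  move=> wlog_le lt_t1 lt_t2 eq_mod.
  by case: (leqP t1 t2) => [|/ltnW] le; [|apply/esym]; apply: wlog_le.
move=> _ lt_t2 /eqP; rewrite eq_sym eqn_mod_dvd ?leq_mul2r ?le_t12 ?orbT //.
rewrite -mulnBl => m_dvd.
case: (posnP l) => [l0 | l_gt0].
  by move: lt_t2; rewrite l0 gcd0n divnn m_gt0; lia.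
have : lcmn l m %| (t2 - t1) * l by rewrite dvdn_lcm dvdn_mull ?m_dvd.
rewrite /lcmn -muln_divA ?dvdn_gcdr // mulnC dvdn_pmul2r // => c_dvd.
by case: (posnP (t2 - t1)) => [|/dvdn_leq/(_ c_dvd)]; lia.
Qed.

Lemma coset_enum_divmod r t : t < c -> coset_enum (r * c + t) = (r + t * l) %% m.
Proof.
move=> lt_tc; rewrite /coset_enum divnMDl ?order_gt0 // divn_small // addn0.
by rewrite modnMDl (modn_small lt_tc).
Qed.

Lemma coset_enum_inj : {in iota 0 m &, injective coset_enum}.
Proof.
move=> i1 i2; rewrite !mem_iota !add0n => /andP[_ lt_i1] /andP[_ lt_i2].
rewrite (divn_eq i1 c) (divn_eq i2 c) !coset_enum_divmod ?ltn_pmod ?order_gt0 //.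
have mod_gcd i t : i < m -> (i %/ c + t * l) %% m %% g = i %/ c.
  move=> lt_im; rewrite (modn_dvdm _ (dvdn_gcdr l m)) -modnDmr.
  by rewrite (eqP (dvdn_mull t (dvdn_gcdl l m))) addn0 modn_small ?div_order_lt.
move=> eq_enum.
have eq_div : i1 %/ c = i2 %/ c.
  by rewrite -(mod_gcd i1 (i1 %% c)) // eq_enum mod_gcd.
rewrite eq_div in eq_enum *; congr (_ + _).
move/eqP: eq_enum; rewrite eqn_modDl => /eqP.
by apply: lt_order_mul_mod_inj; rewrite ltn_pmod ?order_gt0.
Qed.

Lemma perm_coset_enum : perm_eq (mkseq coset_enum m) (iota 0 m).
Proof.
have enum_uniq : uniq (mkseq coset_enum m).
  by rewrite map_inj_in_uniq ?iota_uniq //; exact: coset_enum_inj.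
have enum_sub : {subset mkseq coset_enum m <= iota 0 m}.
  by move=> _ /mapP[i _ ->]; rewrite mem_iota ltn_pmod.
have size_le : size (iota 0 m) <= size (mkseq coset_enum m).
  by rewrite size_iota size_mkseq.
have [_ eq_mem] := uniq_min_size enum_uniq enum_sub size_le.
by apply: uniq_perm; rewrite ?iota_uniq.
Qed.

Lemma coset_enumK i : i < m -> coset_rank (coset_enum i) = i.
Proof.
move=> lt_im; rewrite /coset_rank -(nth_mkseq 0 coset_enum lt_im).
by rewrite index_uniq ?size_mkseq // (perm_uniq perm_coset_enum) iota_uniq.
Qed.

Lemma coset_rank_lt j : j < m -> coset_rank j < m.
Proof.
move=> lt_jm; rewrite -[X in _ < X](size_mkseq coset_enum) index_mem.
by rewrite (perm_mem perm_coset_enum) mem_iota.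
Qed.

Lemma coset_rankK j : j < m -> coset_enum (coset_rank j) = j.
Proof.
move=> lt_jm; rewrite -(nth_mkseq 0 coset_enum (coset_rank_lt lt_jm)) nth_index //.
by rewrite (perm_mem perm_coset_enum) mem_iota.
Qed.

Lemma perm_coset_rank : perm_eq (mkseq coset_rank m) (iota 0 m).
Proof.
have rank_enum : map coset_rank (mkseq coset_enum m) = iota 0 m.
  rewrite -map_comp -[RHS]map_id; apply/eq_in_map => i.
  by rewrite mem_iota => /andP[_ lt_im]; exact: coset_enumK.
by rewrite -rank_enum; apply: perm_map; rewrite perm_sym perm_coset_enum.
Qed.

Lemma coset_rank_addl j : j < m -> coset_rank ((j + l) %% m) <= (coset_rank j).+1.
Proof.
move=> lt_jm; have lt_im := coset_rank_lt lt_jm.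
rewrite -{1}(coset_rankK lt_jm); set i := coset_rank j in lt_im *.
have lt_rg := div_order_lt lt_im.
rewrite {1}(divn_eq i c) coset_enum_divmod ?ltn_pmod ?order_gt0 //.
rewrite modnDml -addnA -mulSnr.
case: (ltnP (i %% c).+1 c) => [lt_t1c | le_ct1].
  have le_m : i %/ c * c + c <= m.
    by rewrite -mulSnr -[leqRHS]order_mul_gcd mulnC leq_mul2l lt_rg orbT.
  rewrite -coset_enum_divmod // coset_enumK; first by rewrite addnS -divn_eq.
  by rewrite mulnC; lia.
(* j ends its coset, so j + l is the coset's first element, of rank (i %/ c) * c *)
have -> : (i %% c).+1 = c by apply/eqP; rewrite eqn_leq le_ct1 ltn_pmod ?order_gt0.
rewrite mulnC muln_divCA_gcd mulnC addnC modnMDl -[i %/ c]addn0 -(mul0n l).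
rewrite -coset_enum_divmod ?order_gt0 // coset_enumK.
  by rewrite addn0 {2}(divn_eq i c) leqW // leq_addr.
by rewrite addn0 (leq_ltn_trans _ lt_im) // {2}(divn_eq i c) leq_addr.
Qed.

End CosetOrder.

Lemma sum_pairs l (F : nat -> nat) :
  \sum_(j < l.*2) F j = \sum_(q < l) (F q.*2 + F q.*2.+1).
Proof.
elim: l => [|l IHl]; first by rewrite !big_ord0.
by rewrite doubleS !big_ord_recr /= IHl addnA.
Qed.

Lemma mkseq_perm_iota_lt (a : nat -> nat) m p :
  perm_eq (mkseq a m) (iota 0 m) -> p < m -> a p < m.
Proof.
move=> a_perm lt_pm.
have : a p \in mkseq a m by apply/mapP; exists p; rewrite ?mem_iota.
by rewrite (perm_mem a_perm) mem_iota.
Qed.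

Lemma mkseq_perm_iota_surj (a : nat -> nat) m v :
  perm_eq (mkseq a m) (iota 0 m) -> v < m -> exists2 p, p < m & a p = v.
Proof.
move=> a_perm lt_vm; have : v \in mkseq a m by rewrite (perm_mem a_perm) mem_iota.
by case/mapP=> p; rewrite mem_iota => /andP[_ lt_pm] ->; exists p.
Qed.

Lemma modn_double y d : y.*2 %% d.*2 = (y %% d).*2.
Proof. by rewrite -!muln2 muln_modl. Qed.

Lemma modn_doubleS y d : 0 < d -> y.*2.+1 %% d.*2 = (y %% d).*2.+1.
Proof.
move=> d_gt0; rewrite -addn1 -modnDml modn_double modn_small addn1 //.
by have := ltn_pmod y d_gt0; lia.
Qed.

Section Zigzag.

Variables (a : nat -> nat) (m : nat).
Hypothesis a_perm : perm_eq (mkseq a m) (iota 0 m).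

Definition zigzag :=
  mkseq (fun i => if odd i then m.*2 - a i./2 else (a i./2).+1) m.*2.

Lemma size_zigzag : size zigzag = m.*2.
Proof. exact: size_mkseq. Qed.

Lemma nth_zigzag_even p : p < m -> nth 0 zigzag p.*2 = (a p).+1.
Proof. by move=> lt_pm; rewrite nth_mkseq ?odd_double ?doubleK // ltn_double. Qed.

Lemma nth_zigzag_odd p : p < m -> nth 0 zigzag p.*2.+1 = m.*2 - a p.
Proof.
by move=> lt_pm; rewrite nth_mkseq /= ?odd_double ?uphalf_double //; lia.
Qed.

Lemma perm_zigzag : perm_eq zigzag (iota 1 m.*2).
Proof.
have iota_sub : {subset iota 1 m.*2 <= zigzag}.
  move=> v; rewrite mem_iota => /andP[v_gt0 lt_v].
  case: (leqP v m) => [le_vm | lt_mv].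
    have [|p lt_pm a_p] := mkseq_perm_iota_surj a_perm (_ : v.-1 < m); first by lia.
    rewrite -[v](_ : nth 0 zigzag p.*2 = v); last first.
      by rewrite nth_zigzag_even // a_p; lia.
    by rewrite mem_nth // size_zigzag ltn_double.
  have [|p lt_pm a_p] := mkseq_perm_iota_surj a_perm (_ : m.*2 - v < m); first by lia.
  rewrite -[v](_ : nth 0 zigzag p.*2.+1 = v); last first.
    by rewrite nth_zigzag_odd // a_p; lia.
  by rewrite mem_nth // size_zigzag; lia.
have size_le : size zigzag <= size (iota 1 m.*2) by rewrite size_zigzag size_iota.
have [size_eq eq_mem] := uniq_min_size (iota_uniq 1 m.*2) iota_sub size_le.
by apply: uniq_perm; rewrite ?iota_uniq // -(eq_uniq size_eq eq_mem) iota_uniq.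
Qed.

Lemma zigzag_pair p : p < m -> nth 0 zigzag p.*2 + nth 0 zigzag p.*2.+1 = m.*2.+1.
Proof.
move=> lt_pm; rewrite nth_zigzag_even // nth_zigzag_odd //.
by have := mkseq_perm_iota_lt a_perm lt_pm; lia.
Qed.

Hypothesis m_gt0 : 0 < m.

Lemma kcsum_zigzag_even l p : kcsum zigzag l.*2 p.*2 = l * m.*2.+1.
Proof.
rewrite /kcsum size_zigzag (sum_pairs l (fun j => nth 0 zigzag ((p.*2 + j) %% m.*2))).
transitivity (\sum_(q < l) m.*2.+1); last by rewrite sum_nat_const card_ord.
apply: eq_bigr => q _.
rewrite addnS -!doubleD modn_double modn_doubleS //.
by rewrite zigzag_pair // ltn_pmod.
Qed.

Lemma kcsum_zigzag_odd l p : p < m ->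
  kcsum zigzag l.*2 p.*2.+1 + a p = l * m.*2.+1 + a ((p + l) %% m).
Proof.
move=> lt_pm; have := kcsumS zigzag l.*2 p.*2.
rewrite size_zigzag modn_small ?ltn_double // -doubleD modn_double.
rewrite kcsum_zigzag_even !nth_zigzag_even ?ltn_pmod //; lia.
Qed.

Lemma maxkcsum_zigzag_le l :
  (forall p, p < m -> a ((p + l) %% m) <= (a p).+1) ->
  maxkcsum zigzag l.*2 <= (l * m.*2.+1).+1.
Proof.
move=> a_step; apply/bigmax_leqP => -[i /=]; rewrite size_zigzag => lt_i _.
move: lt_i; rewrite -(odd_double_half i); case: (odd i); rewrite ?add1n ?add0n => lt_i.
  have lt_pm : i./2 < m by lia.
  by have := kcsum_zigzag_odd l lt_pm; have := a_step _ lt_pm; lia.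
by rewrite kcsum_zigzag_even.
Qed.

End Zigzag.

Lemma msum_perm_double s n l : perm_eq s (iota 1 n) ->
  msum_perm s l.*2 = ((maxkcsum s l.*2)%:R - (l * n.+1)%:R)%R.
Proof.
move=> s_perm; rewrite /msum_perm (perm_size s_perm) size_iota addn1.
by congr (_ - _)%R; rewrite -mul2n -mulnA natrM mulrAC mulfV ?mul1r.
Qed.

Lemma one_le_msum_perm s n l : perm_eq s (iota 1 n) ->
  (1 <= msum_perm s l.*2)%R = (l * n.+1 < maxkcsum s l.*2).
Proof.
by move=> s_perm; rewrite (msum_perm_double _ s_perm) lerBrDr addrC natr1 ler_nat.
Qed.

Lemma msum_perm_le1 s n l : perm_eq s (iota 1 n) ->
  (msum_perm s l.*2 <= 1)%R = (maxkcsum s l.*2 <= (l * n.+1).+1).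
Proof.
by move=> s_perm; rewrite (msum_perm_double _ s_perm) lerBlDr addrC natr1 ler_nat.
Qed.

Theorem theorem1p2 (n k : nat) :
  (0 < k)%N -> (k < n)%N -> ~~ odd n -> ~~ odd k -> msum n k = 1%R.
Proof.
move=> k_gt0 lt_kn /even_halfK n_eq /even_halfK k_eq.
move: k_gt0 lt_kn; rewrite -{}n_eq -{}k_eq; move: n./2 k./2 => m l.
rewrite double_gt0 ltn_double => l_gt0 lt_lm.
have m_gt0 : 0 < m := ltn_trans l_gt0 lt_lm.
have msum_ge1 s : s \in permutations (iota 1 m.*2) -> (1 <= msum_perm s l.*2)%R.
  rewrite mem_permutations => s_perm.
  rewrite (one_le_msum_perm _ s_perm) -ltn_double doubleMl maxkcsum_gt //.
  by rewrite double_gt0 ltn_double l_gt0.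
have rank_perm := perm_coset_rank l m_gt0.
have z_perm := perm_zigzag rank_perm.
have z_le1 : (msum_perm (zigzag (coset_rank l m) m) l.*2 <= 1)%R.
  rewrite (msum_perm_le1 _ z_perm); apply: (maxkcsum_zigzag_le rank_perm m_gt0).
  by move=> p; apply: coset_rank_addl.
rewrite /msum; apply: le_anti; apply/andP; split.
  by apply: le_trans z_le1; apply: ge_bigmin_seq; rewrite ?mem_permutations.
by rewrite big_seq le_bigmin // msum_ge1 // mem_permutations.
Qed.
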